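(* Consider a single advertising slot sold by the following hybrid auction. Each advertiser $j$ submits a bid pair $(m_j, c_j)$ with $m_j, c_j \ge 0$ (a per-impression bid and a per-click bid). The auctioneer has, for each advertiser $j$, a value $q_j > 0$ (the auctioneer index) that does not depend on any bids. The effective bid of advertiser $j$ is $R_j = \max(m_j, c_j q_j)$. The advertiser $j^*$ with the highest effective bid wins the slot; let $R_{-j^*}$ denote the highest effective bid among the other advertisers. If $m_{j^*} > c_{j^*} q_{j^*}$, the winner pays $R_{-j^*}$ per impression; otherwise the winner pays $R_{-j^*}/q_{j^*}$ per click. Let advertiser $j$ have true value $v_j > 0$ per click, and let $\mathcal{P}_j$ be advertiser $j$'s belief (prior distribution) about its click-through probability, with mean $p_j = \mathbb{E}[\mathcal{P}_j] > 0$. Suppose advertiser $j$ is myopic and risk-neutral, i.e. it maximizes its expected profit in the current step, where if it wins it receives expected value $p_j v_j$ and pays either the per-impression price or $p_j$ times the per-click price. Then, regardless of the value of $q_j$, bidding $(v_j p_j, v_j)$ is a strongly dominant strategy for advertiser $j$: for every $q_j>0$ and every value of the highest competing effective bid, it yields expected profit at least as large as any other bid pair, and for every other bid pair $(m_j,c_j)$ there exist values of $q_j$ and of the highest competing effective bid for which $(m_j,c_j)$ yields strictly smaller expected profit than $(v_j p_j, v_j)$.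
   Context: Single-slot auction; all notation is defined in the claim. Expected profit of a losing advertiser is $0$. *)

From Stdlib Require Import Reals.
Open Scope R_scope.

Definition eff_bid (m c q : R) : R := Rmax m (c * q).

(* The paper does not specify tie-breaking; [tie = true]
   means ties are won by the advertiser, [tie = false] means ties are lost. *)
Definition wins (tie : bool) (Rj r : R) : bool :=
  if tie then (if Rle_dec r Rj then true else false)
  else (if Rlt_dec r Rj then true else false).

(* Myopic risk-neutral expected profit of an advertiser with value v per click
   and mean click-through belief p, bidding (m, c), with auctioneer index q,
   facing highest competing effective bid r. *)
Definition exp_profit (tie : bool) (v p q m c r : R) : R :=
  if wins tie (eff_bid m c q) r then
    (if Rlt_dec (c * q) m then p * v - r else p * v - p * (r / q))
  else 0.

(* A winner pays either r per impression or r/q per click, so its profit is at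
   most [best_win_profit], the better of the two modes.  The truthful bid
   (v p, v) always selects the better mode, and its effective bid is exactly
   the price at which that best profit vanishes: the best profit is a positive
   multiple of (eff_bid (v p) v q - r).  Hence truthful bidding earns
   max(0, best_win_profit), which bounds every bid.  A bid whose effective bid
   differs from the truthful one at some q loses strictly against any r
   strictly between the two: it either wins at a loss or misses a profitable
   win. *)
From Stdlib Require Import Reals Lra Psatz.
Open Scope R_scope.

Definition best_win_profit (v p q r : R) : R :=
  Rmax (p * v - r) (p * v - p * (r / q)).

Lemma wins_of_lt (tie : bool) (Rj r : R) : r < Rj -> wins tie Rj r = true.
Proof.
  intros Hlt; unfold wins; destruct tie.
  - destruct (Rle_dec r Rj); [reflexivity | lra].
  - destruct (Rlt_dec r Rj); [reflexivity | lra].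
Qed.

Lemma wins_of_gt (tie : bool) (Rj r : R) : Rj < r -> wins tie Rj r = false.
Proof.
  intros Hgt; unfold wins; destruct tie.
  - destruct (Rle_dec r Rj); [lra | reflexivity].
  - destruct (Rlt_dec r Rj); [lra | reflexivity].
Qed.

Lemma wins_true_le (tie : bool) (Rj r : R) : wins tie Rj r = true -> r <= Rj.
Proof.
  unfold wins; destruct tie.
  - destruct (Rle_dec r Rj); [trivial | discriminate].
  - destruct (Rlt_dec r Rj); [lra | discriminate].
Qed.

Lemma wins_false_ge (tie : bool) (Rj r : R) : wins tie Rj r = false -> Rj <= r.
Proof.
  unfold wins; destruct tie.
  - destruct (Rle_dec r Rj); [discriminate | lra].
  - destruct (Rlt_dec r Rj); [discriminate | lra].
Qed.

Lemma exp_profit_of_loss (tie : bool) (v p q m c r : R) :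
  wins tie (eff_bid m c q) r = false -> exp_profit tie v p q m c r = 0.
Proof. intros Hloss; unfold exp_profit; rewrite Hloss; reflexivity. Qed.

Lemma exp_profit_of_win (tie : bool) (v p q m c r : R) :
  wins tie (eff_bid m c q) r = true ->
  exp_profit tie v p q m c r <= best_win_profit v p q r.
Proof.
  intros Hwin; unfold exp_profit, best_win_profit; rewrite Hwin.
  destruct (Rlt_dec (c * q) m); [apply Rmax_l | apply Rmax_r].
Qed.

Lemma exp_profit_le_best (tie : bool) (v p q m c r : R) :
  exp_profit tie v p q m c r <= Rmax 0 (best_win_profit v p q r).
Proof.
  destruct (wins tie (eff_bid m c q) r) eqn:Hwin.
  - eapply Rle_trans; [apply exp_profit_of_win; exact Hwin | apply Rmax_r].
  - rewrite exp_profit_of_loss by exact Hwin; apply Rmax_l.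
Qed.

Lemma div_nonneg (x y : R) : 0 <= x -> 0 < y -> 0 <= x / y.
Proof.
  intros Hx Hy; apply Rmult_le_pos; [exact Hx | left; apply Rinv_0_lt_compat, Hy].
Qed.

Lemma best_win_profit_impression (v p q r : R) :
  0 < q -> q <= p -> 0 <= r -> best_win_profit v p q r = p * v - r.
Proof.
  intros hq Hqp hr; unfold best_win_profit; apply Rmax_left.
  assert (Hrq : 0 <= r / q) by (apply div_nonneg; assumption).
  assert (Hr : r = q * (r / q)) by (field; lra).
  nra.
Qed.

Lemma best_win_profit_click (v p q r : R) :
  0 < q -> p <= q -> 0 <= r -> best_win_profit v p q r = p * v - p * (r / q).
Proof.
  intros hq Hpq hr; unfold best_win_profit; apply Rmax_right.
  assert (Hrq : 0 <= r / q) by (apply div_nonneg; assumption).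
  assert (Hr : r = q * (r / q)) by (field; lra).
  nra.
Qed.

Lemma best_win_profit_scale (v p q r : R) :
  0 < v -> 0 < p -> 0 < q -> 0 <= r ->
  exists k, 0 < k /\ best_win_profit v p q r = k * (eff_bid (v * p) v q - r).
Proof.
  intros hv hp hq hr; unfold eff_bid.
  destruct (Rle_lt_dec q p) as [Hqp | Hpq].
  - exists 1; split; [lra |].
    rewrite best_win_profit_impression, Rmax_left by (assumption || nra); ring.
  - exists (p / q); split; [apply Rdiv_lt_0_compat; assumption |].
    rewrite best_win_profit_click, Rmax_right by (assumption || nra || lra).
    field; lra.
Qed.

Lemma exp_profit_truthful (tie : bool) (v p q r : R) :
  0 < v -> 0 < p -> 0 < q -> 0 <= r ->
  exp_profit tie v p q (v * p) v r = Rmax 0 (best_win_profit v p q r).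
Proof.
  intros hv hp hq hr.
  destruct (best_win_profit_scale v p q r hv hp hq hr) as [k [Hk HW]].
  destruct (wins tie (eff_bid (v * p) v q) r) eqn:Hwin.
  - pose proof (wins_true_le _ _ _ Hwin) as Hr.
    rewrite Rmax_right by nra.
    unfold exp_profit; rewrite Hwin.
    destruct (Rlt_dec (v * q) (v * p)) as [Himp | Hclick].
    + rewrite best_win_profit_impression by (assumption || nra); reflexivity.
    + rewrite best_win_profit_click by (assumption || nra); reflexivity.
  - pose proof (wins_false_ge _ _ _ Hwin) as Hr.
    rewrite exp_profit_of_loss, Rmax_left by (assumption || nra); reflexivity.
Qed.

Lemma exp_profit_lt_truthful (tie : bool) (v p q m c r : R) :
  0 < v -> 0 < p -> 0 < q -> 0 <= r ->
  (eff_bid m c q < r < eff_bid (v * p) v q \/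
   eff_bid (v * p) v q < r < eff_bid m c q) ->
  exp_profit tie v p q m c r < exp_profit tie v p q (v * p) v r.
Proof.
  intros hv hp hq hr Hbetween.
  rewrite exp_profit_truthful by assumption.
  destruct (best_win_profit_scale v p q r hv hp hq hr) as [k [Hk HW]].
  destruct Hbetween as [[Hlow Hhigh] | [Hlow Hhigh]].
  - (* the bid misses a profitable win *)
    rewrite exp_profit_of_loss by (apply wins_of_gt; exact Hlow).
    rewrite Rmax_right by nra; nra.
  - (* the bid wins at a loss *)
    eapply Rle_lt_trans; [apply exp_profit_of_win, wins_of_lt; exact Hhigh |].
    rewrite Rmax_left by nra; nra.
Qed.

Lemma eff_bid_separates (v p m c : R) :
  0 < v -> 0 < p -> 0 <= m -> (m, c) <> (v * p, v) ->
  exists q, 0 < q /\ eff_bid m c q <> eff_bid (v * p) v q.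
Proof.
  intros hv hp hm Hne; unfold eff_bid.
  destruct (Req_dec c v) as [-> | Hcv].
  - (* at q = p/2 the truthful effective bid is v p, which only m can match *)
    exists (p / 2); split; [lra |].
    rewrite (Rmax_left (v * p)) by nra.
    intros Heq; apply Hne; f_equal.
    destruct (Rle_lt_dec m (v * (p / 2))).
    + rewrite Rmax_right in Heq by assumption; nra.
    + rewrite Rmax_left in Heq by lra; exact Heq.
  - (* at q > p + m / v both effective bids are per-click, forcing c = v *)
    set (q := p + m / v + 1).
    assert (Hq : p < q) by (unfold q; pose proof (div_nonneg m v hm hv); lra).
    assert (Hvq : v * q = v * p + m + v) by (unfold q; field; lra).
    exists q; split; [lra |].
    rewrite (Rmax_right (v * p)) by nra.
    intros Heq; apply Hcv.
    destruct (Rle_lt_dec m (c * q)).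
    + rewrite Rmax_right in Heq by assumption.
      apply Rmult_eq_reg_r with q; lra.
    + rewrite Rmax_left in Heq by lra; nra.
Qed.

Theorem theorem1 (tie : bool) (v p : R) (hv : 0 < v) (hp : 0 < p) :
  (forall q r m c, 0 < q -> 0 <= r -> 0 <= m -> 0 <= c ->
     exp_profit tie v p q m c r <= exp_profit tie v p q (v * p) v r)
  /\
  (forall m c, 0 <= m -> 0 <= c -> (m, c) <> (v * p, v) ->
     exists q r, 0 < q /\ 0 <= r /\
       exp_profit tie v p q m c r < exp_profit tie v p q (v * p) v r).
Proof.
  split.
  - intros q r m c hq hr _ _.
    rewrite exp_profit_truthful by assumption.
    apply exp_profit_le_best.
  - intros m c hm hc Hne.
    destruct (eff_bid_separates v p m c hv hp hm Hne) as [q [hq Hsep]].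
    set (B := eff_bid m c q); set (T := eff_bid (v * p) v q).
    assert (hB : 0 <= B) by (unfold B, eff_bid; eapply Rle_trans; [exact hm | apply Rmax_l]).
    assert (hT : 0 <= T) by (unfold T, eff_bid; eapply Rle_trans; [| apply Rmax_l]; nra).
    exists q, ((B + T) / 2); split; [exact hq | split; [lra |]].
    apply exp_profit_lt_truthful; try assumption; [lra |].
    destruct (Rdichotomy B T Hsep); [left | right]; unfold B, T in *; lra.
Qed.
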